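(* Let $U\subseteq\mathbb{E}^s$ be a Pseudo-Riemannian affine homogeneous domain and let $G\le \mathrm{Isom}(U)$ be a subgroup having an open orbit in $\mathbb{R}^n$. Then the centraliser $Z$ of $G$ in $E(s)$ is a connected unipotent group which is nilpotent of class at most two, and every $g\in Z$ satisfies $(g-I_{n+1})^2=0$.
   Context: $\mathbb{E}^s=(\mathbb{R}^n,\langle\cdot,\cdot\rangle_s)$ is pseudo-Euclidean space with a scalar product of signature $s$, and $E(s)=\mathbb{R}^n\rtimes O(s)$ its isometry group, viewed in $\mathrm{Aff}(n)\subset GL(n+1,\mathbb{R})$ via $\begin{pmatrix} g&t\\0&1\end{pmatrix}$. A Pseudo-Riemannian affine homogeneous domain is a connected open $U\subseteq\mathbb{R}^n$ such that $\mathrm{Isom}(U)=\{A\in E(s):A(U)=U\}$ acts transitively on $U$. $I_{n+1}$ is the identity matrix. *)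

From Stdlib Require Import Reals.
From mathcomp Require Import ssreflect ssrfun ssrbool eqtype ssrnat seq fintype bigop.

Set Implicit Arguments.
Unset Strict Implicit.
Unset Printing Implicit Defensive.

Local Open Scope R_scope.

Definition vec (n : nat) := 'I_n -> R.
Definition mat (N : nat) := 'I_N -> 'I_N -> R.

Definition mmul (N : nat) (A B : mat N) : mat N :=
  fun i j => \big[Rplus/0]_(k < N) (A i k * B k j).
Definition mid (N : nat) : mat N := fun i j => if i == j then 1 else 0.
Definition mzero (N : nat) : mat N := fun _ _ => 0.
Arguments mid : clear implicits.
Arguments mzero : clear implicits.
Definition msub (N : nat) (A B : mat N) : mat N := fun i j => A i j - B i j.
Fixpoint mpow (N : nat) (A : mat N) (k : nat) : mat N :=
  match k with O => mid N | S k' => mmul A (mpow A k') end.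
Definition mtr (N : nat) (A : mat N) : mat N := fun i j => A j i.

(* Coordinates 0..n-1 of R^{n+1}; the last index ord_max is the affine one. *)
Definition emb (n : nat) (i : 'I_n) : 'I_n.+1 := widen_ord (leqnSn n) i.

(* Linear part g of an affine matrix [[g, t],[0, 1]]. *)
Definition linpart (n : nat) (A : mat n.+1) : mat n :=
  fun i j => A (emb i) (emb j).

(* A scalar product on R^n: a nondegenerate symmetric bilinear form with
   Gram matrix S (its signature s is whatever it is). *)
Definition scalar_product (n : nat) (S : mat n) : Prop :=
  (forall i j, S i j = S j i) /\
  (forall x : vec n,
     (forall y : vec n,
        \big[Rplus/0]_(i < n) \big[Rplus/0]_(j < n) (x i * S i j * y j) = 0) ->
     forall i, x i = 0).

(* The isometry group E(s) = R^n x| O(s), inside Aff(n) ⊂ GL(n+1, R). *)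
Definition in_E (n : nat) (S : mat n) (A : mat n.+1) : Prop :=
  (forall j : 'I_n, A ord_max (emb j) = 0) /\ A ord_max ord_max = 1 /\
  mmul (mtr (linpart A)) (mmul S (linpart A)) = S.

Definition act (n : nat) (A : mat n.+1) (x : vec n) : vec n :=
  fun i => \big[Rplus/0]_(k < n) (A (emb i) (emb k) * x k) + A (emb i) ord_max.

Definition openV (n : nat) (P : vec n -> Prop) : Prop :=
  forall x, P x -> exists eps, 0 < eps /\
    forall y : vec n, (forall i, Rabs (y i - x i) < eps) -> P y.
Definition openM (N : nat) (P : mat N -> Prop) : Prop :=
  forall A, P A -> exists eps, 0 < eps /\
    forall B : mat N, (forall i j, Rabs (B i j - A i j) < eps) -> P B.

Definition connected_in (T : Type) (opn : (T -> Prop) -> Prop) (Z : T -> Prop) :=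
  forall O1 O2, opn O1 -> opn O2 ->
    (forall z, Z z -> O1 z \/ O2 z) ->
    (forall z, Z z -> O1 z -> O2 z -> False) ->
    (forall z, Z z -> ~ O1 z) \/ (forall z, Z z -> ~ O2 z).

Definition Isom (n : nat) (S : mat n) (U : vec n -> Prop) (A : mat n.+1) : Prop :=
  in_E S A /\ forall y, U y <-> exists x, U x /\ act A x = y.

Definition homogeneous_domain (n : nat) (S : mat n) (U : vec n -> Prop) : Prop :=
  (exists x, U x) /\ openV U /\ connected_in (@openV n) U /\
  forall x y, U x -> U y -> exists A, Isom S U A /\ act A x = y.

Definition is_subgroup (N : nat) (G : mat N -> Prop) : Prop :=
  G (mid N) /\ (forall A B, G A -> G B -> G (mmul A B)) /\
  (forall A, G A -> exists B, G B /\ mmul A B = mid N /\ mmul B A = mid N).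

Definition has_open_orbit (n : nat) (G : mat n.+1 -> Prop) : Prop :=
  exists x : vec n, openV (fun y => exists A, G A /\ act A x = y).

Definition centraliser_E (n : nat) (S : mat n) (G : mat n.+1 -> Prop)
  (g : mat n.+1) : Prop :=
  in_E S g /\ forall h, G h -> mmul g h = mmul h g.

Definition unipotent (N : nat) (g : mat N) : Prop :=
  exists k, mpow (msub g (mid N)) k = mzero N.

(* Nilpotent of class at most two: every commutator [a,b] = a b a^-1 b^-1
   is central. *)
Definition nilpotent_class_le2 (N : nat) (Z : mat N -> Prop) : Prop :=
  forall a a' b b' c, Z a -> Z a' -> Z b -> Z b' -> Z c ->
    mmul a a' = mid N -> mmul b b' = mid N ->
    mmul (mmul (mmul a b) (mmul a' b')) c = mmul c (mmul (mmul a b) (mmul a' b')).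

(* Let G act by isometries of E^s with an open orbit G.x0, and let z commute
   with G.  Writing z = [[I + N, c], [0, 1]], the displacement y |-> z.y - y
   has constant S-norm on the orbit of x0, because
   z.(g.x0) - g.x0 = L_g (z.x0 - x0) and L_g is an isometry.  Near x0 the
   displacement is u + N v (u := z.x0 - x0, v := y - x0), a quadratic
   polynomial in v, so all its coefficients vanish: N^T S N = 0 and
   S(u, N e_i) = 0.  Combined with the isometry equation
   (I+N)^T S (I+N) = S this gives S N = - N^T S, hence S N^2 = 0, N^2 = 0
   and N c = 0 by nondegeneracy of S: every element z of the centraliser
   satisfies (z - I)^2 = 0, and the whole affine line I + t (z - I) stays in
   the centraliser.  Purely algebraically, a multiplicatively closed set of
   such matrices containing these lines is a subgroup whose elements
   z - I pairwise anticommute, so it is nilpotent of class at most two; and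
   it is connected since the lines join every element to the identity. *)
From Stdlib Require Import Reals Lra FunctionalExtensionality Classical.
From HB Require Import structures.
From mathcomp Require Import ssreflect ssrfun ssrbool eqtype ssrnat seq fintype bigop.

Set Implicit Arguments.
Unset Strict Implicit.
Local Open Scope R_scope.

(* Addition on R as a commutative monoid law, so that the bigop lemmas
   (splitting, exchanging, reindexing sums) apply to \big[Rplus/0]. *)
HB.instance Definition _ :=
  Monoid.isComLaw.Build R 0 Rplus (fun x y z => esym (Rplus_assoc x y z))
    Rplus_comm Rplus_0_l.

Lemma sumrMr (n : nat) (c : R) (F : 'I_n -> R) :
  c * (\big[Rplus/0]_(i < n) F i) = \big[Rplus/0]_(i < n) (c * F i).
Proof. by apply: (big_endo (fun x => c * x)) => [x y|]; ring. Qed.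

Lemma sumrMl (n : nat) (c : R) (F : 'I_n -> R) :
  (\big[Rplus/0]_(i < n) F i) * c = \big[Rplus/0]_(i < n) (F i * c).
Proof. by apply: (big_endo (fun x => x * c)) => [x y|]; ring. Qed.

Lemma sumrD (n : nat) (F G : 'I_n -> R) :
  \big[Rplus/0]_(i < n) (F i + G i) =
  \big[Rplus/0]_(i < n) F i + \big[Rplus/0]_(i < n) G i.
Proof. exact: big_split. Qed.

Lemma sum_delta (n : nat) (i : 'I_n) (F : 'I_n -> R) :
  \big[Rplus/0]_(k < n) ((if i == k then 1 else 0) * F k) = F i.
Proof.
rewrite (bigD1 i) //= eqxx Rmult_1_l big1 ?Rplus_0_r //.
by move=> k /negPf; rewrite eq_sym => ->; ring.
Qed.

Lemma sum_delta' (n : nat) (i : 'I_n) (F : 'I_n -> R) :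
  \big[Rplus/0]_(k < n) (F k * (if k == i then 1 else 0)) = F i.
Proof.
by rewrite -[RHS](@sum_delta n i F); apply: eq_bigr => k _; rewrite eq_sym; ring.
Qed.

Lemma sum_nonneg (n : nat) (F : 'I_n -> R) : (forall k, 0 <= F k) ->
  0 <= \big[Rplus/0]_(k < n) F k.
Proof.
by move=> H; apply: (big_ind (fun x => 0 <= x)) => [|x y|k _]; [lra | lra | exact: H].
Qed.

Lemma term_le_sum (n : nat) (F : 'I_n -> R) i : (forall k, 0 <= F k) ->
  F i <= \big[Rplus/0]_(k < n) F k.
Proof.
move=> H; rewrite (bigD1 i) //=.
have : 0 <= \big[Rplus/0]_(k < n | k != i) F k.
  by apply: (big_ind (fun x => 0 <= x)) => [|x y|k _]; [lra | lra | exact: H].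
by move=> ?; rewrite -{1}(Rplus_0_r (F i)); apply: Rplus_le_compat_l.
Qed.

Definition madd (N : nat) (A B : mat N) : mat N := fun i j => A i j + B i j.
Definition mscale (N : nat) (a : R) (A : mat N) : mat N := fun i j => a * A i j.

Lemma meq (N : nat) (A B : mat N) : (forall i j, A i j = B i j) -> A = B.
Proof. by move=> H; do 2 apply: functional_extensionality => ?; exact: H. Qed.

Section MatrixAlgebra.
Variable N : nat.
Implicit Types A B C : mat N.

Lemma mmulA A B C : mmul (mmul A B) C = mmul A (mmul B C).
Proof.
apply: meq => i j; rewrite /mmul.
rewrite (eq_bigr (fun k => \big[Rplus/0]_(l < N) (A i l * B l k * C k j)));
  last by move=> k _; rewrite sumrMl.
rewrite exchange_big; apply: eq_bigr => l _; rewrite sumrMr.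
by apply: eq_bigr => k _; ring.
Qed.

Lemma mmulDl A B C : mmul (madd A B) C = madd (mmul A C) (mmul B C).
Proof. by apply: meq => i j; rewrite /mmul /madd -sumrD; apply: eq_bigr => k _; ring. Qed.
Lemma mmulDr A B C : mmul A (madd B C) = madd (mmul A B) (mmul A C).
Proof. by apply: meq => i j; rewrite /mmul /madd -sumrD; apply: eq_bigr => k _; ring. Qed.
Lemma mmulZl a A B : mmul (mscale a A) B = mscale a (mmul A B).
Proof. by apply: meq => i j; rewrite /mmul /mscale sumrMr; apply: eq_bigr => k _; ring. Qed.
Lemma mmulZr a A B : mmul A (mscale a B) = mscale a (mmul A B).
Proof. by apply: meq => i j; rewrite /mmul /mscale sumrMr; apply: eq_bigr => k _; ring. Qed.
Lemma mmul1l A : mmul (mid N) A = A.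
Proof. by apply: meq => i j; rewrite /mmul /mid sum_delta. Qed.
Lemma mmul1r A : mmul A (mid N) = A.
Proof. by apply: meq => i j; rewrite /mmul /mid sum_delta'. Qed.
Lemma mmul0l A : mmul (mzero N) A = mzero N.
Proof. by apply: meq => i j; rewrite /mmul /mzero big1 // => k _; ring. Qed.
Lemma mmul0r A : mmul A (mzero N) = mzero N.
Proof. by apply: meq => i j; rewrite /mmul /mzero big1 // => k _; ring. Qed.
Lemma madd0r A : madd A (mzero N) = A.
Proof. by apply: meq => i j; rewrite /madd /mzero; ring. Qed.
Lemma mscale0 a : mscale a (mzero N) = mzero N.
Proof. by apply: meq => i j; rewrite /mscale /mzero; ring. Qed.

Lemma mtr_mul A B : mtr (mmul A B) = mmul (mtr B) (mtr A).
Proof. by apply: meq => i j; rewrite /mmul /mtr; apply: eq_bigr => k _; ring. Qed.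
Lemma mtr_id : mtr (mid N) = mid N.
Proof. by apply: meq => i j; rewrite /mtr /mid eq_sym. Qed.

Lemma msubE A B : msub A B = madd A (mscale (-1) B).
Proof. by apply: meq => i j; rewrite /msub /madd /mscale; ring. Qed.

Lemma mid_add_dev A : A = madd (mid N) (msub A (mid N)).
Proof. by apply: meq => i j; rewrite /madd /msub; ring. Qed.

Lemma isometry_expand (S M : mat N) t :
  mmul (mtr (madd (mid N) (mscale t M))) (mmul S (madd (mid N) (mscale t M))) =
  madd (madd S (mscale t (mmul S M)))
       (madd (mscale t (mmul (mtr M) S)) (mscale t (mscale t (mmul (mtr M) (mmul S M))))).
Proof.
have -> : mtr (madd (mid N) (mscale t M)) = madd (mtr (mid N)) (mscale t (mtr M)) by [].
by rewrite mtr_id mmulDl !mmulDr !mmul1l mmul1r !mmulZl !mmulZr.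
Qed.

Lemma line_comm (z h : mat N) t : mmul z h = mmul h z ->
  mmul (madd (mid N) (mscale t (msub z (mid N)))) h =
  mmul h (madd (mid N) (mscale t (msub z (mid N)))).
Proof.
move=> H; rewrite msubE !mmulDl !mmulDr !mmulZl !mmulZr !mmulDl !mmulDr !mmulZl !mmulZr.
by rewrite !mmul1l !mmul1r H.
Qed.
End MatrixAlgebra.

Ltac mnorm := do 8 (rewrite ?mmulDl ?mmulDr ?mmulZl ?mmulZr ?mmulA ?mmul1l ?mmul1r
   ?mmul0l ?mmul0r ?mscale0 ?madd0r).

Section BilinearForms.
Variable n : nat.

Definition vadd (u v : vec n) : vec n := fun i => u i + v i.
Definition vsub (u v : vec n) : vec n := fun i => u i - v i.
Definition vscale (a : R) (u : vec n) : vec n := fun i => a * u i.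
Definition dot (u v : vec n) : R := \big[Rplus/0]_(i < n) (u i * v i).
Definition mv (L : mat n) (v : vec n) : vec n :=
  fun i => \big[Rplus/0]_(k < n) (L i k * v k).
Definition col (P : mat n) (i : 'I_n) : vec n := fun k => P k i.
Definition bil (S : mat n) (u v : vec n) : R :=
  \big[Rplus/0]_(i < n) \big[Rplus/0]_(j < n) (u i * S i j * v j).

Lemma bil_dot S u v : bil S u v = dot u (mv S v).
Proof.
by rewrite /bil /dot /mv; apply: eq_bigr => i _; rewrite sumrMr; apply: eq_bigr => j _; ring.
Qed.

Lemma dot_mv (L : mat n) u w : dot (mv L u) w = dot u (mv (mtr L) w).
Proof.
rewrite /dot /mv /mtr.
rewrite (eq_bigr (fun i => \big[Rplus/0]_(k < n) (L i k * u k * w i)));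
  last by move=> i _; rewrite sumrMl.
rewrite exchange_big; apply: eq_bigr => k _; rewrite sumrMr.
by apply: eq_bigr => i _; ring.
Qed.

Lemma mv_mul (A B : mat n) v : mv (mmul A B) v = mv A (mv B v).
Proof.
apply: functional_extensionality => i; rewrite /mv /mmul.
rewrite (eq_bigr (fun k => \big[Rplus/0]_(l < n) (A i l * B l k * v k)));
  last by move=> k _; rewrite sumrMl.
rewrite exchange_big; apply: eq_bigr => l _; rewrite sumrMr.
by apply: eq_bigr => k _; ring.
Qed.

Lemma bil_mv S L u v :
  bil S (mv L u) (mv L v) = bil (mmul (mtr L) (mmul S L)) u v.
Proof. by rewrite !bil_dot dot_mv !mv_mul. Qed.

Lemma entry_bil (S P Q : mat n) i j :
  mmul (mtr P) (mmul S Q) i j = bil S (col P i) (col Q j).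
Proof.
rewrite /mmul /bil /mtr /col; apply: eq_bigr => k _; rewrite sumrMr.
by apply: eq_bigr => l _; ring.
Qed.

Lemma bil_addl S u v w : bil S (vadd u v) w = bil S u w + bil S v w.
Proof.
rewrite /bil -sumrD; apply: eq_bigr => i _; rewrite -sumrD.
by apply: eq_bigr => j _; rewrite /vadd; ring.
Qed.

Lemma bil_addr S u v w : bil S w (vadd u v) = bil S w u + bil S w v.
Proof.
rewrite /bil -sumrD; apply: eq_bigr => i _; rewrite -sumrD.
by apply: eq_bigr => j _; rewrite /vadd; ring.
Qed.

Lemma bil_scalel S a u w : bil S (vscale a u) w = a * bil S u w.
Proof.
rewrite /bil sumrMr; apply: eq_bigr => i _; rewrite sumrMr.
by apply: eq_bigr => j _; rewrite /vscale; ring.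
Qed.

Lemma bil_scaler S a u w : bil S w (vscale a u) = a * bil S w u.
Proof.
rewrite /bil sumrMr; apply: eq_bigr => i _; rewrite sumrMr.
by apply: eq_bigr => j _; rewrite /vscale; ring.
Qed.

Lemma bil_sym S u v : (forall i j, S i j = S j i) -> bil S u v = bil S v u.
Proof.
move=> HS; rewrite /bil exchange_big; apply: eq_bigr => i _; apply: eq_bigr => j _.
by rewrite HS; ring.
Qed.

Lemma dot_sym u v : dot u v = dot v u.
Proof. by apply: eq_bigr => i _; ring. Qed.

Lemma dot_zero u : dot u (fun _ => 0) = 0.
Proof. by apply: big1 => i _; ring. Qed.

Lemma mv_col (A B : mat n) j : col (mmul A B) j = mv A (col B j).
Proof. by []. Qed.

Lemma mv_mtr (L : mat n) w i : mv (mtr L) w i = dot (col L i) w.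
Proof. by []. Qed.

Lemma bil_expand S (u p r : vec n) a b : (forall i j, S i j = S j i) ->
  bil S (vadd u (vadd (vscale a p) (vscale b r))) (vadd u (vadd (vscale a p) (vscale b r)))
  = bil S u u + 2 * a * bil S u p + 2 * b * bil S u r + a * a * bil S p p
    + 2 * a * b * bil S p r + b * b * bil S r r.
Proof.
move=> HS; rewrite !bil_addl !bil_addr !bil_scalel !bil_scaler.
by rewrite (bil_sym p u HS) (bil_sym r u HS) (bil_sym r p HS); ring.
Qed.

Definition ev (i : 'I_n) : vec n := fun k => if k == i then 1 else 0.

Lemma mv_vadd (L : mat n) u v : mv L (vadd u v) = vadd (mv L u) (mv L v).
Proof.
apply: functional_extensionality => i; rewrite /mv /vadd -sumrD.
by apply: eq_bigr => k _; ring.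
Qed.

Lemma mv_vscale (L : mat n) a u : mv L (vscale a u) = vscale a (mv L u).
Proof.
apply: functional_extensionality => i; rewrite /mv /vscale sumrMr.
by apply: eq_bigr => k _; ring.
Qed.

Lemma mv_ev (L : mat n) i : mv L (ev i) = col L i.
Proof. by apply: functional_extensionality => k; rewrite /mv /ev sum_delta'. Qed.

Lemma skew_mv S (N : mat n) w i :
  madd (mmul (mtr N) S) (mmul S N) = mzero n -> mv S (mv N w) i = - bil S (col N i) w.
Proof.
move=> Hskew; rewrite -mv_mul bil_dot -mv_mtr -mv_mul /mv.
apply: Rminus_diag_uniq; rewrite /Rminus Ropp_involutive -sumrD big1 // => k _.
move: (congr1 (fun M => M i k) Hskew); rewrite /madd /mzero /= => E.
by rewrite -Rmult_plus_distr_r Rplus_comm E; ring.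
Qed.

Lemma isotropic_image S (N : mat n) i w : (forall i j, S i j = S j i) ->
  mmul (mtr N) (mmul S N) = mzero n -> bil S (col N i) (mv N w) = 0.
Proof.
move=> HS HN; have St : mtr S = S by apply: meq => k l; exact: HS.
rewrite bil_dot -mv_mul dot_sym dot_mv mtr_mul St -mv_col mmulA HN.
exact: dot_zero.
Qed.

Lemma scalar_product_cancel S (x : vec n) : scalar_product S ->
  (forall i, mv S x i = 0) -> x = (fun _ => 0).
Proof.
move=> [HS Hnd] H; apply: functional_extensionality => i.
apply: (Hnd x) => y; rewrite -/(bil S x y) bil_sym // bil_dot.
by rewrite (_ : mv S x = fun _ => 0) ?dot_zero //; apply: functional_extensionality.
Qed.
End BilinearForms.

Section Affine.
Variable n : nat.

Lemma emb_eq (i j : 'I_n) : (emb i == emb j) = (i == j).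
Proof. by apply/eqP/eqP => [H|->] //; apply: val_inj; exact: (congr1 val H). Qed.

Lemma max_emb (j : 'I_n) : (ord_max == emb j) = false.
Proof.
by apply/negbTE/eqP => /(congr1 val) /= E; move: (ltn_ord j); rewrite -E ltnn.
Qed.

Lemma ord_cases (p : 'I_n.+1) : p = ord_max \/ exists i : 'I_n, p = emb i.
Proof.
case: (ltnP p n) => H; first by right; exists (Ordinal H); apply: val_inj.
left; apply: val_inj => /=; apply/eqP; rewrite eqn_leq H andbT -ltnS; exact: ltn_ord.
Qed.

Lemma sum_split (F : 'I_n.+1 -> R) :
  \big[Rplus/0]_(k < n.+1) F k = \big[Rplus/0]_(k < n) F (emb k) + F ord_max.
Proof. exact: big_ord_recr. Qed.

Definition affine (A : mat n.+1) : Prop :=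
  (forall j : 'I_n, A ord_max (emb j) = 0) /\ A ord_max ord_max = 1.

Lemma in_E_affine (S : mat n) (A : mat n.+1) : in_E S A -> affine A.
Proof. by case=> H1 [H2 _]. Qed.

Lemma affine_mid : affine (mid n.+1).
Proof. by split => [j|]; rewrite /mid ?max_emb ?eqxx. Qed.

Lemma linpart_mid : linpart (mid n.+1) = mid n.
Proof. by apply: meq => i j; rewrite /linpart /mid emb_eq. Qed.

Lemma linpart_mul (A B : mat n.+1) : affine B ->
  linpart (mmul A B) = mmul (linpart A) (linpart B).
Proof. by move=> [HB1 _]; apply: meq => i j; rewrite /linpart /mmul sum_split HB1; ring. Qed.

Lemma affine_mul (A B : mat n.+1) : affine A -> affine B -> affine (mmul A B).
Proof.
move=> [HA1 HA2] [HB1 HB2]; split => [j|]; rewrite /mmul sum_split ?HB1 ?HB2 HA2 big1;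
  try (by ring); by move=> k _; rewrite HA1; ring.
Qed.

Lemma in_E_mul (S : mat n) (A B : mat n.+1) : in_E S A -> in_E S B -> in_E S (mmul A B).
Proof.
move=> HA HB; have [H1 H2] := affine_mul (in_E_affine HA) (in_E_affine HB).
split => //; split => //.
rewrite (linpart_mul A (in_E_affine HB)) mtr_mul.
case: HA => _ [_ HA]; case: HB => _ [_ HB].
by rewrite mmulA -(mmulA S) -(mmulA (mtr (linpart A))) HA.
Qed.

Lemma act_mid x : act (mid n.+1) x = x.
Proof.
apply: functional_extensionality => i; rewrite /act /mid eq_sym max_emb Rplus_0_r.
by rewrite -[RHS](@sum_delta n i x); apply: eq_bigr => k _; rewrite emb_eq.
Qed.

Lemma act_mul (A B : mat n.+1) x : affine B -> act (mmul A B) x = act A (act B x).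
Proof.
move=> [HB1 HB2]; apply: functional_extensionality => i; rewrite /act /mmul.
rewrite sum_split HB2 Rmult_1_r.
rewrite (eq_bigr (fun k => \big[Rplus/0]_(m < n)
   (A (emb i) (emb m) * B (emb m) (emb k) * x k))); last first.
  by move=> k _; rewrite sum_split HB1 Rmult_0_r Rplus_0_r sumrMl.
rewrite exchange_big /= -Rplus_assoc -sumrD; congr (_ + _); apply: eq_bigr => m _.
by rewrite Rmult_plus_distr_l sumrMr; congr (_ + _); apply: eq_bigr => k _; ring.
Qed.

Lemma act_sub (A : mat n.+1) u v :
  vsub (act A u) (act A v) = mv (linpart A) (vsub u v).
Proof.
apply: functional_extensionality => i; rewrite /vsub /act /mv /linpart.
rewrite [RHS](eq_bigr (fun k => A (emb i) (emb k) * u k + (-1) * (A (emb i) (emb k) * v k))).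
  by rewrite sumrD -sumrMr; ring.
by move=> k _; ring.
Qed.
Definition lindev (A : mat n.+1) : mat n := msub (linpart A) (mid n).
Definition transl (A : mat n.+1) : vec n := fun k => A (emb k) ord_max.

Lemma dev_row (A : mat n.+1) q : affine A -> msub A (mid n.+1) ord_max q = 0.
Proof.
move=> [H1 H2]; rewrite /msub /mid.
by case: (ord_cases q) => [->|[j ->]]; rewrite ?eqxx ?H2 ?max_emb ?H1; ring.
Qed.

Lemma dev_lin (A : mat n.+1) i k : msub A (mid n.+1) (emb i) (emb k) = lindev A i k.
Proof. by rewrite /lindev /msub /linpart /mid emb_eq. Qed.

Lemma dev_transl (A : mat n.+1) k : msub A (mid n.+1) (emb k) ord_max = transl A k.
Proof. by rewrite /msub /mid eq_sym max_emb /transl; ring. Qed.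

Definition displacement (A : mat n.+1) (y : vec n) : vec n := vsub (act A y) y.

Lemma displacement_affine (A : mat n.+1) x :
  displacement A x = vadd (mv (lindev A) x) (transl A).
Proof.
apply: functional_extensionality => i.
rewrite /displacement /vsub /vadd /act /mv /lindev /msub /linpart /mid /transl.
rewrite [X in _ = X + _](eq_bigr (fun k =>
   A (emb i) (emb k) * x k + (-1) * ((if i == k then 1 else 0) * x k)));
  last by move=> k _; ring.
by rewrite sumrD -sumrMr sum_delta; ring.
Qed.

Lemma affine_square_zero (A : mat n.+1) : affine A ->
  mmul (lindev A) (lindev A) = mzero n -> mv (lindev A) (transl A) = (fun _ => 0) ->
  mmul (msub A (mid n.+1)) (msub A (mid n.+1)) = mzero n.+1.
Proof.
move=> HA HN Hc; apply: meq => p q; rewrite /mmul sum_split dev_row // Rmult_0_r Rplus_0_r.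
case: (ord_cases p) => [->|[i ->]]; first by apply: big1 => k _; rewrite dev_row //; ring.
case: (ord_cases q) => [->|[j ->]].
  rewrite -[RHS](congr1 (fun w => w i) Hc).
  by apply: eq_bigr => k _; rewrite dev_lin dev_transl.
rewrite -[RHS](congr1 (fun M => M i j) HN).
by apply: eq_bigr => k _; rewrite !dev_lin.
Qed.

Lemma affine_line_in_E (S : mat n) (A : mat n.+1) t : affine A ->
  mmul (mtr (lindev A)) (mmul S (lindev A)) = mzero n ->
  madd (mmul (mtr (lindev A)) S) (mmul S (lindev A)) = mzero n ->
  in_E S (madd (mid n.+1) (mscale t (msub A (mid n.+1)))).
Proof.
move=> HA Hiso Hskew; split; [|split].
- by move=> j; rewrite /madd /mscale dev_row // /mid max_emb; ring.
- by rewrite /madd /mscale dev_row // /mid eqxx; ring.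
have -> : linpart (madd (mid n.+1) (mscale t (msub A (mid n.+1)))) =
          madd (mid n) (mscale t (lindev A)).
  by apply: meq => i j; rewrite /linpart /madd /mscale dev_lin /mid emb_eq.
rewrite isometry_expand Hiso !mscale0 madd0r.
apply: meq => i j; move: (congr1 (fun M => M i j) Hskew).
by rewrite /madd /mscale /mzero /= => E; rewrite -[RHS]Rplus_0_r -(Rmult_0_r t) -E; ring.
Qed.
End Affine.


Lemma small_quadratic_zero (e X Y P Q W : R) : 0 < e ->
  (forall a b, Rabs a < e -> Rabs b < e ->
     2 * a * X + 2 * b * Y + a * a * P + 2 * a * b * Q + b * b * W = 0) ->
  X = 0 /\ Y = 0 /\ P = 0 /\ Q = 0 /\ W = 0.
Proof.
move=> He H; set d := e / 2.
have Hd : Rabs d < e by rewrite Rabs_right /d; lra.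
have Hmd : Rabs (- d) < e by rewrite Rabs_Ropp.
have H0 : Rabs 0 < e by rewrite Rabs_R0.
have dn0 : d <> 0 by rewrite /d; lra.
have E1 := H d 0 Hd H0; have E2 := H (- d) 0 Hmd H0.
have E3 := H 0 d H0 Hd; have E4 := H 0 (- d) H0 Hmd; have E5 := H d d Hd Hd.
have hX : d * X = 0 by nra.
have hY : d * Y = 0 by nra.
have hP : d * (d * P) = 0 by nra.
have hW : d * (d * W) = 0 by nra.
have hQ : d * (d * Q) = 0 by nra.
have cancel1 : forall T, d * T = 0 -> T = 0 by move=> T /Rmult_integral [/dn0|].
have cancel2 : forall T, d * (d * T) = 0 -> T = 0 by move=> T /cancel1/cancel1.
by rewrite (cancel1 _ hX) (cancel1 _ hY) (cancel2 _ hP) (cancel2 _ hQ) (cancel2 _ hW).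
Qed.

Section CentralisingElement.
Variables (n : nat) (S : mat n) (G : mat n.+1 -> Prop) (x0 : vec n) (z : mat n.+1).
Hypothesis hS : scalar_product S.
Hypothesis hGE : forall A, G A -> in_E S A.
Hypothesis hG1 : G (mid n.+1).
Hypothesis hO : openV (fun y => exists A, G A /\ act A x0 = y).
Hypothesis hz : centraliser_E S G z.

Let N := lindev z.
Let u := displacement z x0.

(* z commutes with g, so it moves g.x0 by the g-image of its displacement of x0. *)
Lemma orbit_displacement g : G g -> displacement z (act g x0) = mv (linpart g) u.
Proof.
move=> Gg; have [hzE hzc] := hz; have gA := in_E_affine (hGE Gg).
by rewrite /displacement -(act_mul z x0 gA) hzc // (act_mul g x0 (in_E_affine hzE)) act_sub.
Qed.

Lemma displacement_norm_const : exists e, 0 < e /\ forall v : vec n,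
  (forall i, Rabs (v i) < e) ->
  bil S (displacement z (vadd x0 v)) (displacement z (vadd x0 v)) = bil S u u.
Proof.
have [e [He Horb]] := hO (ex_intro _ (mid n.+1) (conj hG1 (act_mid x0))).
exists e; split => // v Hv.
have [g [Gg Hg]] : exists g, G g /\ act g x0 = vadd x0 v.
  by apply: Horb => i; rewrite /vadd (_ : x0 i + v i - x0 i = v i) //; ring.
have [_ [_ Hiso]] := hGE Gg.
by rewrite -Hg orbit_displacement // bil_mv Hiso.
Qed.

Lemma displacement_near v : displacement z (vadd x0 v) = vadd u (mv N v).
Proof.
rewrite /u !displacement_affine mv_vadd.
by apply: functional_extensionality => k; rewrite /vadd /N; ring.
Qed.

(* Comparing coefficients: the columns of N are S-isotropic, mutually
   S-orthogonal and S-orthogonal to the displacement u of x0. *)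
Lemma displacement_orthogonality i j :
  bil S u (col N i) = 0 /\ bil S (col N i) (col N j) = 0.
Proof.
have [e [He Hconst]] := displacement_norm_const.
have Hsmall : forall a b, Rabs a < e / 2 -> Rabs b < e / 2 ->
    forall k, Rabs (vadd (vscale a (ev i)) (vscale b (ev j)) k) < e.
  move=> a b Ha Hb k; rewrite /vadd /vscale.
  have Hev : forall l, Rabs (ev l k) <= 1.
    by move=> l; rewrite /ev; case: (k == l); rewrite ?Rabs_R1 ?Rabs_R0; lra.
  apply: (Rle_lt_trans _ _ _ (Rabs_triang _ _)); rewrite !Rabs_mult.
  have := Hev i; have := Hev j; have := Rabs_pos a; have := Rabs_pos b; nra.
have Hquad : forall a b, Rabs a < e / 2 -> Rabs b < e / 2 ->
    2 * a * bil S u (col N i) + 2 * b * bil S u (col N j)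
    + a * a * bil S (col N i) (col N i) + 2 * a * b * bil S (col N i) (col N j)
    + b * b * bil S (col N j) (col N j) = 0.
  move=> a b Ha Hb; have := Hconst _ (Hsmall a b Ha Hb).
  rewrite displacement_near mv_vadd !mv_vscale !mv_ev bil_expand //; first lra.
  exact: hS.1.
have He2 : 0 < e / 2 by lra.
by have [Hi [_ [_ [Hij _]]]] := small_quadratic_zero He2 Hquad.
Qed.

Lemma lindev_isotropic : mmul (mtr N) (mmul S N) = mzero n.
Proof. by apply: meq => i j; rewrite entry_bil; exact: (displacement_orthogonality i j).2. Qed.

(* The isometry equation (I + N)^T S (I + N) = S then linearises. *)
Lemma lindev_skew : madd (mmul (mtr N) S) (mmul S N) = mzero n.
Proof.
have [_ [_ Hiso]] := hz.1.
have Hlin : linpart z = madd (mid n) (mscale 1 N).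
  by apply: meq => i j; rewrite /N /lindev /madd /mscale /msub; ring.
rewrite Hlin isometry_expand lindev_isotropic !mscale0 madd0r in Hiso.
apply: meq => i j; move: (congr1 (fun M => M i j) Hiso).
by rewrite /madd /mscale /mzero /=; lra.
Qed.

Lemma lindev_square_zero : mmul N N = mzero n.
Proof.
apply: meq => i j; rewrite -[LHS]/(mv N (col N j) i).
rewrite (scalar_product_cancel hS (x := mv N (col N j))) // => k.
by rewrite skew_mv ?lindev_skew // (displacement_orthogonality k j).2; ring.
Qed.

(* N kills the translation part c = u - N x0 of z. *)
Lemma lindev_transl : mv N (transl z) = (fun _ => 0).
Proof.
apply: (scalar_product_cancel hS) => k; rewrite skew_mv ?lindev_skew //.
have -> : transl z = vadd u (vscale (-1) (mv N x0)).
  by apply: functional_extensionality => l; rewrite /u displacement_affine /vadd /vscale /N; ring.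
rewrite bil_addr bil_scaler (bil_sym _ _ hS.1) (displacement_orthogonality k k).1.
by rewrite isotropic_image ?lindev_isotropic //; [ring | exact: hS.1].
Qed.

Lemma centraliser_square_zero :
  mmul (msub z (mid n.+1)) (msub z (mid n.+1)) = mzero n.+1.
Proof.
exact: affine_square_zero (in_E_affine hz.1) lindev_square_zero lindev_transl.
Qed.

Lemma centraliser_line t : centraliser_E S G (madd (mid n.+1) (mscale t (msub z (mid n.+1)))).
Proof.
split; first exact: affine_line_in_E (in_E_affine hz.1) lindev_isotropic lindev_skew.
by move=> h Gh; apply: line_comm; exact: hz.2.
Qed.
End CentralisingElement.

Lemma centraliser_id (n : nat) (S : mat n) (G : mat n.+1 -> Prop) :
  centraliser_E S G (mid n.+1).
Proof.
split; last by move=> h _; rewrite mmul1l mmul1r.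
have [H1 H2] := @affine_mid n; do 2 split => //.
by rewrite linpart_mid mtr_id mmul1l mmul1r.
Qed.

Lemma centraliser_mul (n : nat) (S : mat n) (G : mat n.+1 -> Prop) a b :
  centraliser_E S G a -> centraliser_E S G b -> centraliser_E S G (mmul a b).
Proof.
move=> [Ea Ca] [Eb Cb]; split; first exact: in_E_mul.
by move=> h Gh; rewrite mmulA Cb // -mmulA Ca // mmulA.
Qed.

Section SquareZeroSets.
Variables (N : nat) (Z : mat N -> Prop).
Hypothesis hsq : forall z, Z z -> mmul (msub z (mid N)) (msub z (mid N)) = mzero N.
Hypothesis hline : forall z t, Z z -> Z (madd (mid N) (mscale t (msub z (mid N)))).
Hypothesis hmul : forall a b, Z a -> Z b -> Z (mmul a b).

Lemma line_product_dev (A B : mat N) s t :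
  msub (mmul (madd (mid N) (mscale s A)) (madd (mid N) (mscale t B))) (mid N) =
  madd (mscale s A) (madd (mscale t B) (mscale (s * t) (mmul A B))).
Proof.
rewrite mmulDl !mmulDr !mmul1l mmul1r mmulZl mmulZr.
by apply: meq => i j; rewrite /msub /madd /mscale; ring.
Qed.

Lemma anticommute_of_square_zero (A B : mat N) : mmul A A = mzero N -> mmul B B = mzero N ->
  (forall s t, mmul
   (madd (mscale s A) (madd (mscale t B) (mscale (s * t) (mmul A B))))
   (madd (mscale s A) (madd (mscale t B) (mscale (s * t) (mmul A B)))) = mzero N) ->
  mmul B A = mscale (-1) (mmul A B).
Proof.
move=> hA hB E.
have hAX : forall X, mmul A (mmul A X) = mzero N by move=> X; rewrite -mmulA hA mmul0l.
have hBX : forall X, mmul B (mmul B X) = mzero N by move=> X; rewrite -mmulA hB mmul0l.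
apply: meq => i j.
have E1 := congr1 (fun X => X i j) (E 1 1).
have E2 := congr1 (fun X => X i j) (E 1 (-1)).
have E3 := congr1 (fun X => X i j) (E (-1) 1).
have E4 := congr1 (fun X => X i j) (E (-1) (-1)).
move: E1 E2 E3 E4; mnorm; rewrite ?hA ?hB ?hAX ?hBX; mnorm.
rewrite /madd /mscale /mzero /=; lra.
Qed.

Lemma dev_anticommute a b : Z a -> Z b ->
  mmul (msub b (mid N)) (msub a (mid N)) = mscale (-1) (mmul (msub a (mid N)) (msub b (mid N))).
Proof.
move=> Za Zb; apply: anticommute_of_square_zero; try exact: hsq.
by move=> s t; rewrite -line_product_dev; apply/hsq/hmul; exact: hline.
Qed.

Lemma square_zero_inverse (M : mat N) : mmul M M = mzero N ->
  mmul (madd (mid N) M) (madd (mid N) (mscale (-1) M)) = mid N /\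
  mmul (madd (mid N) (mscale (-1) M)) (madd (mid N) M) = mid N.
Proof.
move=> hM; split; mnorm; rewrite hM mscale0 madd0r;
  by apply: meq => i j; rewrite /madd /mscale; ring.
Qed.

Lemma square_zero_subgroup : Z (mid N) -> is_subgroup Z.
Proof.
move=> hI; split => //; split => // a Za.
exists (madd (mid N) (mscale (-1) (msub a (mid N)))); split; first exact: hline.
by have [H1 H2] := square_zero_inverse (hsq Za); rewrite -mid_add_dev in H1 H2.
Qed.

Lemma inverse_unique a a' : Z a -> mmul a a' = mid N ->
  a' = madd (mid N) (mscale (-1) (msub a (mid N))).
Proof.
move=> Za H; have [_ H2] := square_zero_inverse (hsq Za); rewrite -mid_add_dev in H2.
by rewrite -[a']mmul1l -{1}H2 mmulA H mmul1r.
Qed.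

Lemma commutator_central (A B C : mat N) :
  mmul A A = mzero N -> mmul B B = mzero N -> mmul C C = mzero N ->
  mmul B A = mscale (-1) (mmul A B) -> mmul C A = mscale (-1) (mmul A C) ->
  mmul C B = mscale (-1) (mmul B C) ->
  mmul (mmul (mmul (madd (mid N) A) (madd (mid N) B))
             (mmul (madd (mid N) (mscale (-1) A)) (madd (mid N) (mscale (-1) B))))
       (madd (mid N) C) =
  mmul (madd (mid N) C)
       (mmul (mmul (madd (mid N) A) (madd (mid N) B))
             (mmul (madd (mid N) (mscale (-1) A)) (madd (mid N) (mscale (-1) B)))).
Proof.
move=> hA hB hC hBA hCA hCB.
have hAX : forall X, mmul A (mmul A X) = mzero N by move=> X; rewrite -mmulA hA mmul0l.
have hBX : forall X, mmul B (mmul B X) = mzero N by move=> X; rewrite -mmulA hB mmul0l.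
have hCX : forall X, mmul C (mmul C X) = mzero N by move=> X; rewrite -mmulA hC mmul0l.
have hBAX : forall X, mmul B (mmul A X) = mscale (-1) (mmul A (mmul B X)).
  by move=> X; rewrite -mmulA hBA mmulZl mmulA.
have hCAX : forall X, mmul C (mmul A X) = mscale (-1) (mmul A (mmul C X)).
  by move=> X; rewrite -mmulA hCA mmulZl mmulA.
have hCBX : forall X, mmul C (mmul B X) = mscale (-1) (mmul B (mmul C X)).
  by move=> X; rewrite -mmulA hCB mmulZl mmulA.
do 6 (mnorm; rewrite ?hA ?hB ?hC ?hAX ?hBX ?hCX ?hBAX ?hCAX ?hCBX ?hBA ?hCA ?hCB).
by apply: meq => i j; rewrite /madd /mscale /mzero; ring.
Qed.

Lemma square_zero_class2 : nilpotent_class_le2 Z.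
Proof.
move=> a a' b b' c Za _ Zb _ Zc Ha Hb.
rewrite (inverse_unique Za Ha) (inverse_unique Zb Hb).
have := commutator_central (hsq Za) (hsq Zb) (hsq Zc)
  (dev_anticommute Za Zb) (dev_anticommute Za Zc) (dev_anticommute Zb Zc).
by rewrite -!mid_add_dev.
Qed.
End SquareZeroSets.

Lemma lub_approx (E : R -> Prop) m x : is_lub E m -> x < m -> exists t, E t /\ x < t.
Proof.
move=> [_ Hlub] Hx; apply: NNPP => Hn.
have : m <= x.
  by apply: Hlub => t Et; apply: Rnot_lt_le => Hxt; apply: Hn; exists t.
lra.
Qed.

Lemma interval_connected (P1 P2 : R -> Prop) :
  (forall t, P1 t -> exists d, 0 < d /\ forall s, Rabs (s - t) < d -> P1 s) ->
  (forall t, P2 t -> exists d, 0 < d /\ forall s, Rabs (s - t) < d -> P2 s) ->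
  (forall t, 0 <= t <= 1 -> P1 t \/ P2 t) ->
  (forall t, 0 <= t <= 1 -> P1 t -> P2 t -> False) ->
  P1 0 -> P1 1.
Proof.
move=> O1 O2 cov dis P10.
pose E t := 0 <= t <= 1 /\ forall s, 0 <= s <= t -> P1 s.
have E0 : E 0 by split => [|s Hs]; [lra | rewrite (_ : s = 0) //; lra].
have Eb : bound E by exists 1 => t [Ht _]; lra.
have [m Hm] := completeness E Eb (ex_intro _ 0 E0).
have [m0 m1] : 0 <= m <= 1 by split; [apply: Hm.1 | apply: Hm.2 => t [Ht _]; lra].
have below : forall s, 0 <= s < m -> P1 s.
  by move=> s Hs; have [t [[_ Et] Hst]] := lub_approx Hm (proj2 Hs); apply: Et; lra.
have P1m : P1 m.
  case: (cov m (conj m0 m1)) => // P2m; have [d [Hd Hd']] := O2 m P2m.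
  have [t [[Ht Et] Hmt]] : exists t, E t /\ m - d < t by apply: lub_approx Hm _; lra.
  have tm : t <= m by apply: Hm.1.
  by exfalso; apply: (dis t Ht); [apply: Et; lra | apply: Hd'; rewrite Rabs_left1; lra].
suff -> : 1 = m by [].
apply: Rle_antisym => //; apply: Rnot_lt_le => Hm1.
have [d [Hd Hd']] := O1 m P1m; pose m' := Rmin 1 (m + d / 2).
have [Hm'1 Hm'd] : m' <= 1 /\ m' <= m + d / 2 by split; [apply: Rmin_l | apply: Rmin_r].
have Hm' : m < m' by apply: Rmin_glb_lt; lra.
suff : E m' by move/Hm.1; lra.
split => [|s Hs]; first lra.
case: (Rlt_le_dec s m) => Hsm; first by apply: below; lra.
by apply: Hd'; rewrite Rabs_right; lra.
Qed.

Definition mnorm1 (N : nat) (M : mat N) : R :=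
  \big[Rplus/0]_(i < N) \big[Rplus/0]_(j < N) Rabs (M i j).

Lemma mnorm1_ge0 (N : nat) (M : mat N) : 0 <= mnorm1 M.
Proof. by apply: sum_nonneg => i; apply: sum_nonneg => j; exact: Rabs_pos. Qed.

Lemma entry_le_mnorm1 (N : nat) (M : mat N) i j : Rabs (M i j) <= mnorm1 M.
Proof.
apply: (Rle_trans _ (\big[Rplus/0]_(l < N) Rabs (M i l))).
  by apply: (@term_le_sum N (fun l => Rabs (M i l)) j) => k; exact: Rabs_pos.
apply: (@term_le_sum N (fun k => \big[Rplus/0]_(l < N) Rabs (M k l)) i) => k.
by apply: sum_nonneg => l; exact: Rabs_pos.
Qed.

Lemma line_open (N : nat) (O : mat N -> Prop) (M : mat N) t :
  openM O -> O (madd (mid N) (mscale t M)) ->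
  exists d, 0 < d /\ forall s, Rabs (s - t) < d -> O (madd (mid N) (mscale s M)).
Proof.
move=> HO Ht; have [e [He He']] := HO _ Ht.
have K0 := mnorm1_ge0 M; set K := 1 + mnorm1 M.
have Kpos : 0 < K by rewrite /K; lra.
exists (e / K); split; first exact: Rdiv_lt_0_compat.
move=> s Hs; apply: He' => i j.
rewrite /madd /mscale (_ : mid N i j + s * M i j - (mid N i j + t * M i j) = (s - t) * M i j);
  last ring.
have HK : Rabs (s - t) * K < e.
  have := Rmult_lt_compat_r K _ _ Kpos Hs.
  by rewrite /Rdiv Rmult_assoc Rinv_l ?Rmult_1_r //; lra.
rewrite Rabs_mult; have := entry_le_mnorm1 M i j; have := Rabs_pos (s - t).
rewrite /K in HK; nra.
Qed.

Section LineConnected.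
Variables (N : nat) (Z : mat N -> Prop).
Hypothesis hline : forall z t, Z z -> Z (madd (mid N) (mscale t (msub z (mid N)))).
Hypothesis hI : Z (mid N).

Lemma separation_trivial (O1 O2 : mat N -> Prop) : openM O1 -> openM O2 ->
  (forall z, Z z -> O1 z \/ O2 z) -> (forall z, Z z -> O1 z -> O2 z -> False) ->
  O1 (mid N) -> forall z, Z z -> ~ O2 z.
Proof.
move=> HO1 HO2 cov dis H1 z Zz H2.
pose p t := madd (mid N) (mscale t (msub z (mid N))).
have p0 : p 0 = mid N by apply: meq => i j; rewrite /p /madd /mscale; ring.
have p1 : p 1 = z by apply: meq => i j; rewrite /p /madd /mscale /msub; ring.
have : O1 (p 1).
  apply: (interval_connected (P1 := fun t => O1 (p t)) (P2 := fun t => O2 (p t))).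
  - by move=> t; exact: line_open.
  - by move=> t; exact: line_open.
  - by move=> t _; apply: cov; exact: hline.
  - by move=> t _; apply: dis; exact: hline.
  - by rewrite p0.
by rewrite p1 => H1z; exact: (dis z Zz H1z H2).
Qed.

Lemma line_connected : connected_in (@openM N) Z.
Proof.
move=> O1 O2 HO1 HO2 cov dis.
case: (cov _ hI) => H; first by right; exact: (separation_trivial HO1 HO2 cov dis H).
left => z Zz H1; apply: (separation_trivial HO2 HO1 _ _ H Zz H1).
- by move=> y Zy; case: (cov y Zy); auto.
- by move=> y Zy a b; exact: (dis y Zy b a).
Qed.
End LineConnected.

Theorem mainTheorem20 (n : nat) (S : mat n) (U : vec n -> Prop)
  (G : mat n.+1 -> Prop) :
  scalar_product S ->
  homogeneous_domain S U ->
  is_subgroup G -> (forall A, G A -> Isom S U A) ->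
  has_open_orbit G ->
  let Z := centraliser_E S G in
  is_subgroup Z /\
  connected_in (@openM n.+1) Z /\
  (forall g, Z g -> unipotent g) /\
  nilpotent_class_le2 Z /\
  (forall g, Z g ->
     mmul (msub g (mid n.+1)) (msub g (mid n.+1)) = mzero n.+1).
Proof.
move=> hS _ [hG1 _] hGI [x0 hO] Z.
have hGE : forall A, G A -> in_E S A := fun A GA => (hGI A GA).1.
have hsq : forall g, Z g -> mmul (msub g (mid n.+1)) (msub g (mid n.+1)) = mzero n.+1 :=
  fun g hg => centraliser_square_zero hS hGE hG1 hO hg.
have hline : forall g t, Z g -> Z (madd (mid n.+1) (mscale t (msub g (mid n.+1)))) :=
  fun g t hg => centraliser_line hS hGE hG1 hO hg t.
have hmul : forall a b, Z a -> Z b -> Z (mmul a b) := @centraliser_mul n S G.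
have hI : Z (mid n.+1) := centraliser_id S G.
split; first exact: square_zero_subgroup.
split; first exact: line_connected.
split; first by move=> g Zg; exists 2%nat; rewrite /= mmul1r; exact: hsq.
split; first exact: square_zero_class2.
exact: hsq.
Qed.
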